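(* For $|q|<1$ and every integer $n\ge1$, $$\frac{1}{(n)_{q^2}!\,(n+1)_{q^2}!}=(1-q^2)^n\sum_{0\le\lambda_n\le\lambda_{n-1}\le\dots\le\lambda_1}C_{\lambda}(q)\,q^{4(\lambda_1+2\lambda_2+\dots+n\lambda_n)},$$ where the sum runs over all $n$-tuples of nonnegative integers $\lambda_1\ge\dots\ge\lambda_n\ge0$, and $C_\lambda(q)=\prod_{i}\frac{1}{(m_i)_{q^2}!}$, where $m_1,m_2,\dots$ are the multiplicities of the distinct values occurring among $\lambda_1,\dots,\lambda_n$ (zeros included).
   Context: $(a)_{q^2}=\frac{q^{2a}-1}{q^2-1}$, $(a)_{q^2}!=(1)_{q^2}(2)_{q^2}\cdots(a)_{q^2}$, $(0)_{q^2}!=1$. Equivalently $C_\lambda(q)=\prod_{i\ge0}\frac1{(\lambda'_i-\lambda'_{i+1})_{q^2}!}$ with $\lambda'_0=n$ and $\lambda'_j=\#\{k:\lambda_k\ge j\}$ for $j\ge1$. *)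

From HB Require Import structures.
From mathcomp Require Import all_boot all_order all_algebra.
From mathcomp Require Import complex.
From mathcomp Require Import all_classical all_reals all_analysis.
Set Implicit Arguments. Unset Strict Implicit. Unset Printing Implicit Defensive.
Import Order.TTheory GRing.Theory Num.Theory.
Import numFieldNormedType.Exports.
Local Open Scope ring_scope.

Definition qint2 (F : fieldType) (q : F) (a : nat) : F :=
  (q ^+ (2 * a) - 1) / (q ^+ 2 - 1).

Definition qfact2 (F : fieldType) (q : F) (a : nat) : F :=
  \prod_(1 <= i < a.+1) qint2 q i.

Definition Clam (F : fieldType) (q : F) (lam : seq nat) : F :=
  \prod_(v <- undup lam) (qfact2 q (count_mem v lam))^-1.

Definition lam_weight (lam : seq nat) : nat :=
  \sum_(i < size lam) (i.+1 * nth 0 lam i)%N.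

Definition part_sum (F : fieldType) (n N : nat) (q : F) : F :=
  \sum_(t : n.-tuple 'I_N.+1 | sorted geq (map val t))
     Clam q (map val t) * q ^+ (4 * lam_weight (map val t)).

(* The complex numbers over R, viewed as a numFieldType so that the
   normed topology of MathComp-Analysis (numFieldNormedType) applies. *)
Definition Cplx (R : realType) : numFieldType := R[i].

From HB Require Import structures.
From mathcomp Require Import all_boot all_order all_algebra.
From mathcomp Require Import complex.
From mathcomp Require Import all_classical all_reals all_analysis.
From mathcomp.algebra_tactics Require Import ring.
From mathcomp.zify Require Import zify.
Import Order.TTheory GRing.Theory Num.Theory.
Import numFieldNormedType.Exports.
Set Implicit Arguments. Unset Strict Implicit. Unset Printing Implicit Defensive.

(* Write x = q^2 and V_N(n) = (1 - x)^n * part_sum n N q.  Sorting the tuples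
   counted by part_sum n (N+1) by their number k of positive entries and
   lowering these entries by one gives the recursion
     V_{N+1}(n) = sum_(k <= n) c(n,k) V_N(k),
     c(n,k) = (1 - x)^(n-k) x^(k(k+1)) / (n-k)_{q^2}!,
   with V_N(0) = 1.  The limit L(n) = 1 / ((n)_{q^2}! (n+1)_{q^2}!) satisfies the
   same recursion: this is the case z = x^2 of the terminating q-binomial identity
     sum_k [n,k]_x x^(k(k-1)) z^k (z x^k; x)_(n-k) = 1.
   Hence the error E_N(n) = V_N(n) - L(n) obeys it too, with E_N(0) = 0.  As
   |c(n,n)| <= |x| < 1 for n > 0, induction on n yields |E_N(n)| <= C_n rho^N
   with rho = (1 + |x|) / 2, so V_N(n) converges geometrically to L(n). *)

Fixpoint nonincr_seqs (N n : nat) : seq (seq nat) :=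
  if N is N'.+1 then
    flatten [seq [seq map succn s ++ nseq (n - k) 0 | s <- nonincr_seqs N' k]
            | k <- iota 0 n.+1]
  else [:: nseq n 0].

Lemma pairwise_geq_nseq0 n : pairwise geq (nseq n 0).
Proof. by elim: n => //= n ->; rewrite all_nseq orbT. Qed.

Lemma filter_pos_shift t m :
  [seq x <- map succn t ++ nseq m 0 | 0 < x] = map succn t.
Proof.
rewrite filter_cat filter_nseq /= cats0.
by rewrite (all_filterP _) // all_map; apply/allP.
Qed.

Lemma nonincr_split s : pairwise geq s ->
  s = map succn (map predn [seq x <- s | 0 < x]) ++ nseq (count_mem 0 s) 0.
Proof.
elim: s => //= -[|v] s IH /andP[v_ge s_dec] /=.
  have /all_pred1P s0 : all (pred1 0) s by apply: sub_all v_ge => x; rewrite /= leqn0.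
  by rewrite s0 filter_nseq count_nseq /= mul1n.
by rewrite add0n {1}(IH s_dec).
Qed.

Lemma mem_nonincr_seqs N n s :
  (s \in nonincr_seqs N n) = [&& size s == n, sorted geq s & all (leq^~ N) s].
Proof.
rewrite sorted_pairwise; last exact: rev_trans leq_trans.
elim: N n s => [|N IH] n s.
  rewrite inE; apply/eqP/and3P => [->|[/eqP <- _ s0]].
    by rewrite size_nseq pairwise_geq_nseq0 all_nseq leqnn orbT.
  by apply/all_pred1P; apply: sub_all s0 => x; rewrite /= leqn0.
apply/flatten_mapP/and3P => [[k] | [/eqP s_n s_dec s_le]].
  rewrite mem_iota ltnS => /andP[_ k_le] /mapP[t].
  rewrite IH => /and3P[/eqP t_k t_dec t_le] ->.
  rewrite size_cat size_map size_nseq t_k subnKC //; split=> //.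
    rewrite pairwise_cat pairwise_map pairwise_geq_nseq0 andbT.
    apply/andP; split; last by apply: sub_pairwise t_dec.
    by apply/allrelP => x y _; rewrite mem_nseq => /andP[_ /eqP ->].
  by rewrite all_cat all_map all_nseq orbT andbT.
set t := map predn [seq x <- s | 0 < x].
have t_size : size t = n - count_mem 0 s.
  have zeros : count (predC (fun x => 0 < x)) s = count_mem 0 s.
    by apply: eq_count => x; rewrite /= lt0n negbK.
  by rewrite size_map size_filter -s_n -(count_predC (fun x => 0 < x)) zeros addnK.
exists (size t); first by rewrite mem_iota ltnS t_size leq_subr.
apply/mapP; exists t; last first.
  by rewrite t_size subKn -?s_n ?count_size // -nonincr_split.
change (t \in nonincr_seqs N (size t)).
rewrite IH eqxx pairwise_map all_map /=.
apply/andP; split.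
  by apply: sub_pairwise (pairwise_filter _ s_dec) => a b /=; lia.
by apply/allP => x; rewrite mem_filter => /andP[_ /(allP s_le)] /=; lia.
Qed.

Lemma nonincr_seqs_uniq N n : uniq (nonincr_seqs N n).
Proof.
elim: N n => [//|N IH] n.
change (uniq [seq map succn s ++ nseq (n - k) 0
             | k <- iota 0 n.+1, s <- nonincr_seqs N k]).
apply: allpairs_uniq_dep => [|k _|]; rewrite ?iota_uniq //.
move=> [k1 t1] [k2 t2] /allpairsPdep[k1' [t1' [_ t1_in [-> ->]]]].
move=> /allpairsPdep[k2' [t2' [_ t2_in [-> ->]]]] /= eq_shift.
have := congr1 (seq.filter (fun x => 0 < x)) eq_shift.
rewrite !filter_pos_shift => /(inj_map succn_inj) eq_t.
move: t1_in t2_in; rewrite eq_t !mem_nonincr_seqs.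
by move=> /andP[/eqP <- _] /andP[/eqP <- _].
Qed.

Lemma triangular_double k : ((\sum_(i < k) i.+1) * 2 = k * k.+1)%N.
Proof. by elim: k => [|k IH]; rewrite ?big_ord0 // big_ord_recr /= mulnDl IH; lia. Qed.

Lemma lam_weight_shift t m :
  lam_weight (map succn t ++ nseq m 0) = (lam_weight t + \sum_(i < size t) i.+1)%N.
Proof.
rewrite /lam_weight size_cat size_map size_nseq big_split_ord /=.
rewrite [X in (_ + X)%N]big1 ?addn0 => [|i _]; last first.
  by rewrite nth_cat size_map ltnNge leq_addr /= nth_nseq if_same muln0.
rewrite -big_split; apply: eq_bigr => i _ /=.
by rewrite nth_cat size_map ltn_ord (nth_map 0) // mulnSr.
Qed.

Local Open Scope ring_scope.

Section PartitionSum.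
Variables (F : fieldType) (q : F).

Lemma qfact2_0 : qfact2 q 0 = 1.
Proof. by rewrite /qfact2 big_geq. Qed.

Lemma qfact2_S k : qfact2 q k.+1 = qfact2 q k * qint2 q k.+1.
Proof. by rewrite /qfact2 big_nat_recr. Qed.

Lemma Clam_prod_ord B s : all (leq^~ B) s ->
  Clam q s = \prod_(v < B.+1) (qfact2 q (count_mem (v : nat) s))^-1.
Proof.
move=> s_le; rewrite -(big_mkord xpredT (fun v => (qfact2 q (count_mem v s))^-1)).
rewrite (bigID (mem s)) /= [X in _ * X]big1 ?mulr1 => [|v /count_memPn ->]; last first.
  by rewrite qfact2_0 invr1.
rewrite -big_filter; apply: perm_big; apply: uniq_perm.
- exact: undup_uniq.
- by rewrite filter_uniq ?iota_uniq.
move=> v; rewrite mem_undup mem_filter mem_iota add0n subn0 ltnS.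
by apply/idP/andP => [v_in | []//]; rewrite (allP s_le).
Qed.

Lemma Clam_shift t m :
  Clam q (map succn t ++ nseq m 0) = Clam q t / qfact2 q m.
Proof.
set B := \max_(v <- t) v.
have t_le : all (leq^~ B) t by apply/allP => v v_in; exact: leq_bigmax_seq.
rewrite (Clam_prod_ord t_le) (@Clam_prod_ord B.+1); last first.
  by rewrite all_cat all_map all_nseq orbT andbT; apply: sub_all t_le.
rewrite big_ord_recl mulrC; congr (_ * _).
  apply: eq_bigr => v _; rewrite count_cat count_map count_nseq /= addn0.
  by congr (qfact2 q _)^-1; apply: eq_count.
by rewrite count_cat count_map count_nseq /= mul1n (@eq_count _ _ pred0) ?count_pred0.
Qed.

Definition part_summand (s : seq nat) : F := Clam q s * q ^+ (4 * lam_weight s).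

Lemma part_summand_shift t m :
  part_summand (map succn t ++ nseq m 0) =
  (qfact2 q m)^-1 * q ^+ (2 * (size t * (size t).+1)) * part_summand t.
Proof.
rewrite /part_summand Clam_shift lam_weight_shift -triangular_double.
have -> : (4 * (lam_weight t + \sum_(i < size t) i.+1) =
           2 * ((\sum_(i < size t) i.+1) * 2) + 4 * lam_weight t)%N by lia.
by rewrite exprD; ring.
Qed.

Lemma part_sum_seqs n N :
  part_sum n N q = \sum_(s <- nonincr_seqs N n) part_summand s.
Proof.
rewrite /part_sum -(big_map (fun t : n.-tuple 'I_N.+1 => map val t) (fun s => sorted geq s)
                     part_summand).
rewrite -big_filter; apply: perm_big; apply: uniq_perm.
- rewrite filter_uniq // map_inj_uniq ?index_enum_uniq // => t1 t2.
  by move/(inj_map val_inj)/val_inj.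
- exact: nonincr_seqs_uniq.
move=> s; rewrite mem_nonincr_seqs mem_filter andbC.
apply/andP/and3P => [[/mapP[t _ ->] t_dec] | [/eqP s_n s_dec s_le]].
  by rewrite size_map size_tuple all_map; split=> //; apply/allP => i _ /=; rewrite -ltnS.
split=> //; have s_size : size (map (@inord N) s) == n by rewrite size_map s_n.
apply/mapP; exists (Tuple s_size); first by rewrite mem_index_enum.
by rewrite /= -map_comp map_id_in // => v /(allP s_le) v_le /=; rewrite inordK.
Qed.

Lemma part_sum_0 n : part_sum n 0 q = (qfact2 q n)^-1.
Proof.
rewrite part_sum_seqs big_seq1 -[nseq n 0]/(map succn [::] ++ nseq n 0).
rewrite part_summand_shift /part_summand /Clam /lam_weight big_nil big_ord0.
by rewrite !muln0 expr0 !mulr1.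
Qed.

Lemma part_sum_S n N : part_sum n N.+1 q =
  \sum_(k < n.+1) (qfact2 q (n - k))^-1 * q ^+ (2 * (k * k.+1)) * part_sum k N q.
Proof.
rewrite part_sum_seqs big_flatten big_map.
rewrite -(big_mkord xpredT (fun k =>
  (qfact2 q (n - k))^-1 * q ^+ (2 * (k * k.+1)) * part_sum k N q)).
apply: eq_bigr => k _; rewrite big_map part_sum_seqs mulr_sumr !big_seq.
apply: eq_bigr => s; rewrite mem_nonincr_seqs => /andP[/eqP s_k _].
by rewrite part_summand_shift s_k.
Qed.
End PartitionSum.

Section QBinomialRecursion.
Variables (F : fieldType) (q : F).
Let x := q ^+ 2.
Hypothesis x_not_root1 : forall i, (0 < i)%N -> x ^+ i != 1.

Lemma qint2_E i : qint2 q i = (x ^+ i - 1) / (x - 1).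
Proof. by rewrite /qint2 exprM. Qed.

Lemma qint2_neq0 i : (0 < i)%N -> qint2 q i != 0.
Proof.
move=> i_gt0; rewrite qint2_E mulf_neq0 ?invr_eq0 // subr_eq0 ?x_not_root1 //.
by rewrite -[X in X != 1]expr1 x_not_root1.
Qed.

Lemma qfact2_neq0 k : qfact2 q k != 0.
Proof.
elim: k => [|k IH]; first by rewrite qfact2_0 oner_eq0.
by rewrite qfact2_S mulf_neq0 // qint2_neq0.
Qed.

Lemma qint2_D a b : qint2 q (a + b) = qint2 q a + x ^+ a * qint2 q b.
Proof. by rewrite !qint2_E exprD mulrA -mulrDl; congr (_ / _); ring. Qed.

Lemma subx_qint2 j : (1 - x) * qint2 q j = 1 - x ^+ j.
Proof.
have x_neq1 : x - 1 != 0 by rewrite subr_eq0 -[X in X != 1]expr1 x_not_root1.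
by rewrite qint2_E; field.
Qed.

Definition qbinom n k :=
  if (k <= n)%N then qfact2 q n / (qfact2 q k * qfact2 q (n - k)) else 0.

Lemma qbinom_n0 n : qbinom n 0 = 1.
Proof. by rewrite /qbinom subn0 qfact2_0 mul1r divff // qfact2_neq0. Qed.

Lemma qbinom_gt n k : (n < k)%N -> qbinom n k = 0.
Proof. by rewrite /qbinom ltnNge => /negbTE ->. Qed.

Lemma qbinom_pascal n k : (k <= n)%N ->
  qbinom n.+1 k.+1 = qbinom n k.+1 + x ^+ (n - k) * qbinom n k.
Proof.
move=> k_le; have [m ->] : exists m, n = (m + k)%N by exists (n - k)%N; rewrite subnK.
rewrite /qbinom ltnS leq_addl subSS !addnK.
case: m => [|m].
  by rewrite ltnn add0r expr0 mul1r qfact2_0 !mulr1 !divff ?qfact2_neq0.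
rewrite addSn ltnS leq_addl subSS addnK !qfact2_S.
have -> : qint2 q (m + k).+2 = qint2 q m.+1 + x ^+ m.+1 * qint2 q k.+1.
  by rewrite -qint2_D addnS addSn.
by field; rewrite !qfact2_neq0 !qint2_neq0.
Qed.

Definition qpoch (a : F) m := \prod_(i < m) (1 - a * x ^+ i).

Lemma qpochS a m : qpoch a m.+1 = qpoch a m * (1 - a * x ^+ m).
Proof. by rewrite /qpoch big_ord_recr. Qed.

Lemma qpoch_qfact2 m k :
  qpoch (x ^+ k.+2) m * qfact2 q k.+1 = (1 - x) ^+ m * qfact2 q (k.+1 + m).
Proof.
elim: m => [|m IH]; first by rewrite /qpoch big_ord0 mul1r expr0 mul1r addn0.
rewrite qpochS -exprD -subx_qint2 addnS (qfact2_S q (k.+1 + m)) (exprS (1 - x)).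
transitivity (qpoch (x ^+ k.+2) m * qfact2 q k.+1 * ((1 - x) * qint2 q (k.+2 + m))).
  by ring.
by rewrite IH; ring.
Qed.

Lemma qbinom_qpoch_sum n z :
  \sum_(k < n.+1) qbinom n k * x ^+ (k * k.-1) * z ^+ k * qpoch (z * x ^+ k) (n - k) = 1.
Proof.
pose S m w :=
  \sum_(k < m.+1) qbinom m k * x ^+ (k * k.-1) * w ^+ k * qpoch (w * x ^+ k) (m - k).
change (S n z = 1); elim: n z => [|n IH] z.
  by rewrite /S big_ord1 qbinom_n0 /qpoch big_ord0 !expr0 !mulr1.
pose C k := x ^+ (k * k.-1) * z ^+ k * qpoch (z * x ^+ k) (n.+1 - k).
have split_pascal : S n.+1 z =
    \sum_(k < n.+2) qbinom n k * C k + \sum_(k < n.+2) (qbinom n.+1 k - qbinom n k) * C k.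
  by rewrite -big_split; apply: eq_bigr => k _ /=; rewrite /C; ring.
have low_part : \sum_(k < n.+2) qbinom n k * C k = (1 - z * x ^+ n) * S n z.
  rewrite big_ord_recr /= qbinom_gt // mul0r addr0 mulr_sumr; apply: eq_bigr => k _.
  have k_le : (k <= n)%N by rewrite -ltnS.
  rewrite /C subSn // qpochS -[z * x ^+ k * _]mulrA -exprD subnKC //; ring.
have high_part : \sum_(k < n.+2) (qbinom n.+1 k - qbinom n k) * C k = z * x ^+ n * S n (z * x).
  rewrite big_ord_recl /= !qbinom_n0 subrr mul0r add0r mulr_sumr; apply: eq_bigr => j _.
  have j_le : (j <= n)%N by rewrite -ltnS.
  rewrite /bump /= add1n qbinom_pascal // addrC addKr /C subSS.
  have -> : z * x ^+ j.+1 = z * x * x ^+ j by rewrite exprS mulrA [z * x]mulrC.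
  have expE : (n - j + j.+1 * j.+1.-1 = n + j * j.-1 + j)%N.
    by case: (j : nat) j_le => [|i] i_le /=; rewrite ?muln0 ?subn0 ?addn0 //; nia.
  transitivity (qbinom n j * qpoch (z * x * x ^+ j) (n - j) * z ^+ j.+1 *
                (x ^+ (n - j) * x ^+ (j.+1 * j.+1.-1))); first by ring.
  by rewrite -exprD expE !exprD [(z * x) ^+ j]exprMn [z ^+ j.+1]exprS; ring.
by rewrite split_pascal low_part high_part !IH; ring.
Qed.

Definition rec_coef n k := (1 - x) ^+ (n - k) / qfact2 q (n - k) * x ^+ (k * k.+1).

Lemma qfact2_pair_rec n : (qfact2 q n * qfact2 q n.+1)^-1 =
  \sum_(k < n.+1) rec_coef n k * (qfact2 q k * qfact2 q k.+1)^-1.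
Proof.
rewrite -[LHS]mulr1 -(qbinom_qpoch_sum n (x ^+ 2)) mulr_sumr.
apply: eq_bigr => -[k /=]; rewrite ltnS => k_le _.
have poch_E : qpoch (x ^+ 2 * x ^+ k) (n - k) =
    (1 - x) ^+ (n - k) * qfact2 q n.+1 / qfact2 q k.+1.
  have := qpoch_qfact2 (n - k) k; rewrite addSn subnKC // => <-.
  by rewrite -exprD mulfK ?qfact2_neq0.
have exp_E : x ^+ (k * k.+1) = x ^+ (k * k.-1) * (x ^+ 2) ^+ k.
  by rewrite -exprM -exprD; congr (_ ^+ _); case: (k) => [|i] //=; lia.
rewrite poch_E /qbinom k_le /rec_coef exp_E.
by field; rewrite !qfact2_neq0.
Qed.

Definition scaled_part_sum N n := (1 - x) ^+ n * part_sum n N q.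
Definition part_limit n := (qfact2 q n * qfact2 q n.+1)^-1.
Definition part_error N n := scaled_part_sum N n - part_limit n.

Lemma scaled_part_sum_S N n :
  scaled_part_sum N.+1 n = \sum_(k < n.+1) rec_coef n k * scaled_part_sum N k.
Proof.
rewrite /scaled_part_sum part_sum_S mulr_sumr; apply: eq_bigr => -[k /=].
rewrite ltnS => k_le _; rewrite /rec_coef -/x -exprM -{1}(subnK k_le) exprD; ring.
Qed.

Lemma part_error_S N n :
  part_error N.+1 n = \sum_(k < n.+1) rec_coef n k * part_error N k.
Proof.
rewrite /part_error scaled_part_sum_S /part_limit qfact2_pair_rec -sumrB.
by apply: eq_bigr => k _; ring.
Qed.

Lemma part_error_0 N : part_error N 0 = 0.
Proof.
have part_sum0 : part_sum 0 N q = 1.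
  elim: N => [|N IH]; first by rewrite part_sum_0 qfact2_0 invr1.
  by rewrite part_sum_S big_ord1 subn0 qfact2_0 invr1 IH mulr1 mul1r expr0.
have x_neq1 : x != 1 by rewrite -[x]expr1 x_not_root1.
rewrite /part_error /scaled_part_sum /part_limit part_sum0 expr0 mulr1.
by rewrite qfact2_S qfact2_0 /qint2 muln1 !mul1r divff ?invr1 ?subrr // subr_eq0.
Qed.
End QBinomialRecursion.

Lemma expr_neq1_of_norm_lt1 (K : numDomainType) (y : K) i :
  `|y| < 1 -> (0 < i)%N -> y ^+ i != 1.
Proof.
move=> y_lt1 i_gt0; apply/eqP => /(congr1 Num.norm) /eqP.
by rewrite normrX normr1 pexpr_eq1 ?normr_ge0 // => /eqP y1; rewrite y1 ltxx in y_lt1.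
Qed.

Lemma geometric_bound_of_rec (K : numFieldType) (u : nat -> K) (A a rho : K) :
  0 <= u 0%N -> 0 <= A -> 0 <= a -> a < rho ->
  (forall N, u N.+1 <= A * rho ^+ N + a * u N) ->
  forall N, u N <= (u 0%N + A / (rho - a)) * rho ^+ N.
Proof.
move=> u0 A0 a0 a_rho u_rec; set D := _ + _.
have rho_a : 0 < rho - a by rewrite subr_gt0.
have rho0 : 0 <= rho by rewrite (le_trans a0) ?ltW.
elim=> [|N IH]; first by rewrite expr0 mulr1 /D lerDl divr_ge0 // ltW.
have -> : D * rho ^+ N.+1 =
    A * rho ^+ N + a * (D * rho ^+ N) + (rho - a) * u 0%N * rho ^+ N.
  rewrite exprS /D; field; exact: lt0r_neq0.
apply: (le_trans (u_rec N)); rewrite -addrA lerD2l ler_wpDr ?ler_wpM2l //.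
by rewrite !mulr_ge0 ?exprn_ge0 // ltW.
Qed.

Section ErrorBound.
Variables (K : numFieldType) (q : K).
Hypothesis q_lt1 : `|q| < 1.
Let x := q ^+ 2.

Definition decay_rate := (`|x| + 1) / 2.

Lemma sq_expr_neq1 i : (0 < i)%N -> x ^+ i != 1.
Proof. by move=> i_gt0; rewrite -exprM expr_neq1_of_norm_lt1 // muln_gt0. Qed.

Lemma norm_sq_lt1 : `|x| < 1.
Proof. by rewrite normrX exprn_ilt1. Qed.

Lemma norm_sq_lt_decay_rate : `|x| < decay_rate.
Proof. exact: (midf_lt norm_sq_lt1).1. Qed.

Lemma decay_rate_lt1 : decay_rate < 1.
Proof. exact: (midf_lt norm_sq_lt1).2. Qed.

Lemma decay_rate_ge0 : 0 <= decay_rate.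
Proof. exact: le_trans (normr_ge0 _) (ltW norm_sq_lt_decay_rate). Qed.

Lemma norm_rec_coef_diag n : (0 < n)%N -> `|rec_coef q n n| <= `|x|.
Proof.
case: n => [//|n] _; rewrite /rec_coef subnn qfact2_0 expr0 divr1 mul1r normrX.
rewrite -{2}[`|x|]expr1 ler_wiXn2l ?normr_ge0 ?ltW ?norm_sq_lt1 //.
Qed.

Lemma part_error_bound n : exists2 C, 0 <= C &
  forall k, (k <= n)%N -> forall N, `|part_error q N k| <= C * decay_rate ^+ N.
Proof.
have rho_pow_ge0 N : 0 <= decay_rate ^+ N by rewrite exprn_ge0 ?decay_rate_ge0.
elim: n => [|n [C C0 err_le]].
  exists 0 => // k; rewrite leqn0 => /eqP -> N.
  by rewrite (part_error_0 sq_expr_neq1) normr0 mul0r.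
set A := \sum_(k < n.+1) `|rec_coef q n.+1 k| * C.
have A0 : 0 <= A by rewrite sumr_ge0 // => k _; rewrite mulr_ge0.
have last_rec N : `|part_error q N.+1 n.+1| <=
    A * decay_rate ^+ N + `|x| * `|part_error q N n.+1|.
  rewrite (part_error_S sq_expr_neq1) big_ord_recr /=; apply: (le_trans (ler_normD _ _)).
  apply: lerD; last by rewrite normrM ler_wpM2r ?norm_rec_coef_diag.
  rewrite /A mulr_suml; apply: (le_trans (ler_norm_sum _ _ _)); apply: ler_sum => k _.
  by rewrite normrM -mulrA ler_wpM2l ?normr_ge0 // err_le // -ltnS.
have := geometric_bound_of_rec (normr_ge0 _) A0 (normr_ge0 _) norm_sq_lt_decay_rate last_rec.
set D := _ + _ => last_le.
have D0 : 0 <= D by rewrite /D addr_ge0 ?divr_ge0 // subr_ge0 ltW ?norm_sq_lt_decay_rate.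
exists (C + D); first exact: addr_ge0.
move=> k; rewrite leq_eqVlt ltnS => /orP[/eqP -> | k_le] N.
  by rewrite (le_trans (last_le N)) // ler_wpM2r // lerDr.
by rewrite (le_trans (err_le k k_le N)) // ler_wpM2r // lerDl.
Qed.
End ErrorBound.

Local Open Scope classical_set_scope.

Lemma cvg_geometric_bound (R : realType) (u : nat -> Cplx R) (l C rho : Cplx R) :
  0 <= C -> 0 <= rho -> rho < 1 -> (forall N, `|u N - l| <= C * rho ^+ N) ->
  u @ \oo --> l.
Proof.
move=> C0 rho0 rho1 u_le.
(* Move to R, where [cvg_expr] applies (it needs an archimedean field). *)
have /complex_realP[c Ec] := ger0_real C0.
have /complex_realP[r Er] := ger0_real rho0; subst C rho.
move: C0 rho0 rho1; rewrite !lecE ltcE /= => /andP[_ c0] /andP[_ r0] /andP[_ r1].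
apply/(@cvgrPdist_le _ (Cplx R)) => _ /[dup] /gtr0_real/complex_realP[e ->].
rewrite ltcE /= => /andP[_ e0].
have ec : (0 < e / (c + 1))%R by rewrite divr_gt0 // ltr_wpDl.
have r_lt1 : `|r| < 1 by rewrite ger0_norm.
have r_pow_small := (cvgr0Pnorm_le _).1 (cvg_expr r_lt1) _ ec.
near=> N; rewrite distrC (le_trans (u_le N)) //.
have : `|r ^+ N| <= e / (c + 1) by near: N; exact: r_pow_small.
rewrite -rmorphXn -rmorphM lecR ger0_norm ?exprn_ge0 // => r_pow_le.
rewrite (le_trans (ler_wpM2l c0 r_pow_le)) // mulrA ler_pdivrMr ?ltr_wpDl //.
by rewrite mulrDr mulr1 mulrC lerDl ltW.
Unshelve. all: end_near.
Qed.

Unset Implicit Arguments.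

Theorem mainTheorem12 (R : realType) (q : Cplx R) (n : nat) :
  `|q| < 1 -> (0 < n)%N ->
  (fun N : nat => (1 - q ^+ 2) ^+ n * part_sum n N q) @ \oo -->
    (qfact2 q n * qfact2 q n.+1)^-1.
Proof.
move=> q_lt1 _.
have [C C0 err_le] := part_error_bound q_lt1 n.
apply: (cvg_geometric_bound C0 (decay_rate_ge0 q_lt1) (decay_rate_lt1 q_lt1)) => N.
exact: err_le.
Qed.
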